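(* Let $I\subset G$ be a subgroup and $\mathrm{N}I=\sum_{g\in I}g\in\mathcal{O}[G]$. Then $\mathcal{O}[G]/(\mathrm{N}I)\cong R_\Psi$ with $\Psi=\{\psi\in\hat G:\psi(I)\neq1\}$; more precisely, the kernel of the canonical surjection $\mathcal{O}[G]\to R_\Psi$ is the ideal generated by $\mathrm{N}I$.
   Context: $G$ is a finite abelian group, $p$ an odd prime, and $\mathcal{O}$ a finite extension of $\mathbf{Z}_p$ containing all values of all characters $G\to\overline{\mathbf{Q}}_p^*$; $\hat G$ is the set of such characters. For a subset $\Psi\subset\hat G$, $R_\Psi$ denotes the image of the $\mathcal O$-algebra map $\mathcal{O}[G]\to\prod_{\psi\in\Psi}\mathcal{O}$, $x\mapsto(\psi(x))_{\psi\in\Psi}$. *)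

From HB Require Import structures.
From mathcomp Require Import all_boot all_order all_fingroup all_algebra all_solvable.
Set Implicit Arguments. Unset Strict Implicit. Unset Printing Implicit Defensive.
Import GRing.Theory.
Local Open Scope ring_scope.

Definition rdvd (R : comNzRingType) (a b : R) : Prop := exists c : R, b = c * a.

Definition is_dvr_unif (O : idomainType) (pi : O) : Prop :=
  [/\ pi != 0, pi \notin GRing.unit &
      forall x : O, x != 0 ->
        exists (n : nat) (u : O), u \in GRing.unit /\ x = u * pi ^+ n].

Definition pi_cauchy (O : idomainType) (pi : O) (a : nat -> O) : Prop :=
  forall k : nat, exists N : nat, forall m n : nat,
    (N <= m)%N -> (N <= n)%N -> rdvd (pi ^+ k) (a m - a n).

Definition pi_converges (O : idomainType) (pi : O) (a : nat -> O) (l : O) : Prop :=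
  forall k : nat, exists N : nat, forall n : nat,
    (N <= n)%N -> rdvd (pi ^+ k) (a n - l).

(* "O is a finite extension of Z_p", i.e. the ring of integers of a finite
   extension of Q_p: a complete DVR of characteristic 0 whose residue field
   is finite of characteristic p. *)
Definition finite_ext_Zp (p : nat) (O : idomainType) : Prop :=
  (forall n : nat, (n%:R : O) = 0 -> n = 0%N) /\
  exists pi : O,
    [/\ is_dvr_unif pi,
        (forall a : nat -> O, pi_cauchy pi a -> exists l, pi_converges pi a l),
        (exists s : seq O, forall x : O, exists2 r, r \in s & rdvd pi (x - r)) &
        rdvd pi (p%:R : O)].

(* elements of O[G] are functions G -> O (coefficients) *)
Definition gmul (O : comNzRingType) (gT : finGroupType)
  (x y : {ffun gT -> O}) : {ffun gT -> O} :=
  [ffun g => \sum_(h : gT) x h * y ((h^-1) * g)%g].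

Definition normI (O : comNzRingType) (gT : finGroupType) (I : {set gT})
  : {ffun gT -> O} := [ffun g => (g \in I)%:R].

Definition is_character (O : comNzRingType) (gT : finGroupType) (psi : gT -> O)
  : Prop := psi 1%g = 1 /\ forall g h : gT, psi (g * h)%g = psi g * psi h.

Definition char_eval (O : comNzRingType) (gT : finGroupType) (psi : gT -> O)
  (x : {ffun gT -> O}) : O := \sum_(g : gT) x g * psi g.

(* O contains all values of all characters of G (into Qbar_p^x), i.e. all
   exponent(G)-th roots of unity *)
Definition has_char_values (O : comNzRingType) (gT : finGroupType) : Prop :=
  exists z : O, primitive_root_of_unity (exponent [set: gT]) z.

(* A character psi that is nontrivial on I kills NI, because the sum of psi
   over I is fixed by multiplication by psi g <> 1; since char_eval psi is
   multiplicative on O[G], it kills the whole ideal (NI).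
   Conversely, let x be killed by every psi nontrivial on I and let h be in I.
   The translate g |-> x (h g) minus x is then killed by every character:
   its image under psi is (psi h^-1 - 1) * char_eval psi x, and one of the
   two factors vanishes according as psi is trivial on I or not.
   Over a domain of characteristic 0 containing a primitive exp(G)-th root of
   unity z, characters of the abelian group G determine elements of O[G]
   (Fourier inversion), so x is constant on the cosets I g, and x = NI * y
   for y = x restricted to a set of coset representatives.
   For the inversion we use the characters z ^+ k, k ranging over the finite
   group of homomorphisms G -> Z/exp(G); these separate points because complex
   linear characters do, via discrete logarithms. *)

From HB Require Import structures.
From mathcomp Require Import all_boot all_order all_fingroup all_algebra all_solvable.
From mathcomp Require Import all_field all_character.
Set Implicit Arguments.
Unset Strict Implicit.
Unset Printing Implicit Defensive.

Import GRing.Theory.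
Local Open Scope ring_scope.

Section PrimitiveRootOrdinalPowers.

Variables (R : nzRingType) (n : nat) (z : R).
Hypothesis prim_z : n.+1.-primitive_root z.

Lemma prim_expr_ordD (i j : 'I_n.+1) : z ^+ (i + j)%R = z ^+ i * z ^+ j.
Proof. by rewrite [nat_of_ord _]/= expr_mod ?exprD // prim_expr_order. Qed.

Lemma prim_expr_ord_inj : injective (fun i : 'I_n.+1 => z ^+ i).
Proof.
move=> i j /eqP; rewrite (eq_prim_root_expr prim_z) !modn_small //.
by move/eqP/val_inj.
Qed.

Lemma prim_expr_ord_eq1 (i : 'I_n.+1) : (z ^+ i == 1) = (i == 0).
Proof.
apply/eqP/eqP => [|->]; last by rewrite expr0.
by rewrite -(expr0 z) => /(@prim_expr_ord_inj i 0).
Qed.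

End PrimitiveRootOrdinalPowers.

Section HomsToCyclic.

Variables (gT : finGroupType) (n : nat).
Implicit Types k l : {ffun gT -> 'I_n.+1}.

Definition ord_hom k : bool :=
  [forall a, forall b, k (a * b)%g == k a + k b].

Lemma ord_homP k : reflect (forall a b, k (a * b)%g = k a + k b) (ord_hom k).
Proof.
apply: (iffP forallP) => [kM a b | kM a].
  exact/eqP/(forallP (kM a)).
by apply/forallP => b; rewrite kM.
Qed.

Lemma ord_hom1 k : ord_hom k -> k 1%g = 0.
Proof.
by move/ord_homP=> kM; apply: (@addrI _ (k 1%g)); rewrite -kM mulg1 addr0.
Qed.

Lemma ord_hom0 : ord_hom 0.
Proof. by apply/ord_homP => a b; rewrite !ffunE addr0. Qed.

Lemma ord_homD k l : ord_hom k -> ord_hom l -> ord_hom (k + l).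
Proof.
move=> /ord_homP kM /ord_homP lM.
by apply/ord_homP => a b; rewrite !ffunE kM lM addrACA.
Qed.

Lemma ord_homN k : ord_hom k -> ord_hom (- k).
Proof.
by move=> /ord_homP kM; apply/ord_homP => a b; rewrite !ffunE kM opprD.
Qed.

Lemma ord_homDr k l : ord_hom l -> ord_hom (k + l) = ord_hom k.
Proof.
move=> hom_l; apply/idP/idP => [hom_kl|hom_k]; last exact: ord_homD.
by rewrite -(addrK l k); apply/ord_homD/ord_homN.
Qed.

Lemma ord_hom_separates :
    abelian [set: gT] -> (exponent [set: gT] %| n.+1)%N ->
  forall g, g != 1%g -> exists2 k, ord_hom k & k g != 0.
Proof.
move=> abG expG g ntg.
have [i kerg] : exists i : Iirr [set: gT], g \notin cfker 'chi_i.
  apply/existsP; apply: contraR ntg => /existsPn kerg.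
  have : g \in \bigcap_i cfker 'chi[[set: gT]]_i.
    by apply/bigcapP => i _; exact/negPn/kerg.
  by rewrite TI_cfker_irr inE.
have lin_chi : 'chi_i \is a linear_char by apply/char_abelianP.
have [w prim_w] := C_prim_root_exists (ltn0Sn n).
have chi_unity a : 'chi_i a ^+ n.+1 = 1.
  by rewrite -lin_charX ?inE // (exponentP expG) ?inE // lin_char1.
pose k := [ffun a => sval (prim_rootP prim_w (chi_unity a))].
have kE a : 'chi_i a = w ^+ k a.
  by rewrite ffunE; case: (prim_rootP prim_w (chi_unity a)).
exists k.
  apply/ord_homP => a b; apply: (prim_expr_ord_inj prim_w).
  by rewrite /= prim_expr_ordD // -!kE lin_charM ?inE.
rewrite -(prim_expr_ord_eq1 prim_w) -kE -(lin_char1 lin_chi).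
by move: kerg; rewrite cfkerEirr inE.
Qed.

End HomsToCyclic.

Section GroupAlgebra.

Variables (O : comNzRingType) (gT : finGroupType).
Implicit Types (x y : {ffun gT -> O}) (psi : gT -> O).

Lemma char_evalB psi x y :
  char_eval psi (x - y) = char_eval psi x - char_eval psi y.
Proof.
by rewrite /char_eval -sumrB; apply: eq_bigr => g _; rewrite !ffunE mulrBl.
Qed.

Lemma char_eval_shift psi x h : is_character psi ->
  char_eval psi [ffun g => x (h * g)%g] = psi h^-1%g * char_eval psi x.
Proof.
move=> [_ psiM]; rewrite /char_eval mulr_sumr (reindex_inj (mulgI h^-1%g)) /=.
by apply: eq_bigr => g _; rewrite ffunE mulKVg psiM mulrCA.
Qed.

Lemma char_eval_gmul psi x y : is_character psi ->
  char_eval psi (gmul x y) = char_eval psi x * char_eval psi y.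
Proof.
move=> psi_char; rewrite /char_eval mulr_suml.
under eq_bigr => g _ do rewrite ffunE mulr_suml.
rewrite exchange_big /=; apply: eq_bigr => h _.
have := char_eval_shift y h^-1%g psi_char.
rewrite invgK /char_eval -mulrA => <-.
by rewrite mulr_sumr; apply: eq_bigr => g _; rewrite ffunE mulrA.
Qed.

Lemma char_eval_normI psi (I : {set gT}) :
  char_eval psi (normI O I) = \sum_(h in I) psi h.
Proof.
rewrite /char_eval [RHS]big_mkcond; apply: eq_bigr => g _.
by rewrite ffunE; case: (g \in I); rewrite ?mul1r ?mul0r.
Qed.

Lemma gmul_normIE (I : {group gT}) y g :
  gmul (normI O I) y g = \sum_(a in (I :* g)%g) y a.
Proof.
rewrite ffunE (reindex_inj (inj_comp (mulgI g) (@invg_inj gT))) /=.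
rewrite [RHS]big_mkcond.
apply: eq_bigr => a _; rewrite !ffunE mem_rcoset -groupV !invMg !invgK mulgKV.
by case: (_ \in I); rewrite ?mul1r ?mul0r.
Qed.

Lemma normI_divides_invariant (I : {group gT}) x :
  (forall h g, h \in I -> x (h * g)%g = x g) ->
  exists y, x = gmul (normI O I) y.
Proof.
move=> x_inv; exists [ffun a => if a == repr ((I :* a)%g) then x a else 0].
apply/ffunP => g; rewrite gmul_normIE.
have rg : repr ((I :* g)%g) \in (I :* g)%g by apply: mem_repr_rcoset.
rewrite (bigD1 _ rg) /= big1 => [|a /andP[ag /negPf na_r]].
  rewrite addr0 ffunE (rcoset_eqP rg) eqxx.
  by rewrite -[repr _](mulgKV g) x_inv // -mem_rcoset.
by rewrite ffunE (rcoset_eqP ag) na_r.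
Qed.

End GroupAlgebra.

Lemma sum_char_nontrivial (O : idomainType) (gT : finGroupType) (H : {group gT})
    (psi : gT -> O) :
    is_character psi -> (exists2 g, g \in H & psi g != 1) ->
  \sum_(h in H) psi h = 0.
Proof.
move=> [_ psiM] [g Hg psi_g].
have : \sum_(h in H) psi h = psi g * \sum_(h in H) psi h.
  rewrite {1}(reindex_inj (mulgI g)) /= mulr_sumr.
  by apply: eq_big => [h|h _]; rewrite ?groupMl ?psiM.
move/eqP; rewrite -subr_eq0 -{1}[\sum_(h in H) _]mul1r -mulrBl.
by rewrite mulf_eq0 subr_eq0 eq_sym (negPf psi_g) => /eqP.
Qed.

Section CharactersOfHoms.

Variables (O : idomainType) (gT : finGroupType) (n : nat) (z : O).
Hypothesis prim_z : n.+1.-primitive_root z.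
Implicit Types k : {ffun gT -> 'I_n.+1}.

(* Indexing characters by homomorphisms [k] turns sums over characters into
   sums over the finite type [{ffun gT -> 'I_n.+1}]. *)
Definition hom_char k (a : gT) : O := z ^+ k a.

Lemma hom_char_is_character k : ord_hom k -> is_character (hom_char k).
Proof.
move=> hom_k; split; first by rewrite /hom_char ord_hom1.
by move=> a b; rewrite /hom_char (ord_homP _ hom_k) prim_expr_ordD.
Qed.

Lemma sum_hom_char_eq0 u k0 : ord_hom k0 -> k0 u != 0 ->
  \sum_(k | ord_hom k) hom_char k u = 0.
Proof.
move=> hom_k0 k0u; set S := \sum_(k | _) _.
have : S = S * z ^+ k0 u.
  rewrite {1}/S (reindex_inj (addIr k0)) /= mulr_suml.
  apply: eq_big => [k|k _]; first exact: ord_homDr.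
  by rewrite /hom_char ffunE prim_expr_ordD.
move/eqP; rewrite -subr_eq0 -{1}[S]mulr1 -mulrBr mulf_eq0 subr_eq0.
by rewrite [1 == _]eq_sym prim_expr_ord_eq1 // (negPf k0u) orbF => /eqP.
Qed.

Hypothesis ord_hom_sep :
  forall u : gT, u != 1%g ->
  exists2 k : {ffun gT -> 'I_n.+1}, ord_hom k & k u != 0.

Lemma sum_hom_char u :
  \sum_(k | ord_hom k) hom_char k u = #|@ord_hom gT n|%:R *+ (u == 1%g).
Proof.
have [->|/ord_hom_sep[k0 hom_k0 k0u]] := eqVneq u 1%g; last first.
  exact: sum_hom_char_eq0 k0u.
rewrite (eq_bigr (fun=> 1)) => [|k hom_k]; first by rewrite sumr_const.
by rewrite /hom_char ord_hom1.
Qed.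

Lemma hom_char_inversion (x : {ffun gT -> O}) g :
  \sum_(k | ord_hom k) hom_char k g^-1%g * char_eval (hom_char k) x =
  #|@ord_hom gT n|%:R * x g.
Proof.
under eq_bigr => k hom_k.
  rewrite /char_eval mulr_sumr.
  under eq_bigr => a _ do rewrite mulrCA -(proj2 (hom_char_is_character hom_k)).
  over.
rewrite exchange_big /=.
under eq_bigr => a _ do
  rewrite -mulr_sumr sum_hom_char -eq_mulVg1 eq_sym mulrnAr mulrb.
by rewrite -big_mkcond big_pred1_eq mulrC.
Qed.

End CharactersOfHoms.

Lemma char_eval_faithful (O : idomainType) (gT : finGroupType) :
  (forall m : nat, (m%:R : O) = 0 -> m = 0%N) -> abelian [set: gT] ->
  has_char_values O gT -> forall x : {ffun gT -> O},
  (forall psi : gT -> O, is_character psi -> char_eval psi x = 0) -> x = 0.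
Proof.
move=> charO0 abG [z prim_z] x x_ker.
move: prim_z; rewrite -(prednK (exponent_gt0 [set: gT])) => prim_z.
have e_dvd : (exponent [set: gT] %| (exponent [set: gT]).-1.+1)%N.
  by rewrite prednK ?exponent_gt0.
have sep := ord_hom_separates abG e_dvd.
have homs_neq0 : #|@ord_hom gT (exponent [set: gT]).-1|%:R != 0 :> O.
  apply/eqP => /charO0 /eqP; apply/negP; rewrite -lt0n; apply/card_gt0P.
  by exists 0; exact: ord_hom0.
apply/ffunP => g; have := hom_char_inversion prim_z sep x g.
rewrite big1 => [/esym/eqP|k hom_k]; last first.
  by rewrite x_ker ?mulr0 //; apply: hom_char_is_character.
by rewrite mulf_eq0 (negPf homs_neq0) ffunE => /eqP.
Qed.

Lemma kernel_shift_invariant (O : idomainType) (gT : finGroupType)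
    (I : {group gT}) (x : {ffun gT -> O}) :
  (forall m : nat, (m%:R : O) = 0 -> m = 0%N) -> abelian [set: gT] ->
  has_char_values O gT ->
  (forall psi : gT -> O, is_character psi ->
     (exists2 g, g \in I & psi g != 1) -> char_eval psi x = 0) ->
  forall h g, h \in I -> x (h * g)%g = x g.
Proof.
move=> charO0 abG hcv x_ker h g Ih.
suff /ffunP/(_ g) : [ffun a => x (h * a)%g] - x = 0.
  by rewrite !ffunE => /eqP; rewrite subr_eq0 => /eqP.
apply: char_eval_faithful => // psi psi_char.
rewrite char_evalB (char_eval_shift x h psi_char).
have [ntI|] := boolP [exists g in I, psi g != 1].
  by rewrite x_ker ?mulr0 ?subrr //; apply/exists_inP.
rewrite negb_exists_in => /forall_inP psiI.
by rewrite (eqP (negPn (psiI _ _))) ?mul1r ?subrr // groupV.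
Qed.

Theorem lemma2p2 (p : nat) (O : idomainType) (gT : finGroupType)
  (I : {group gT}) :
  prime p -> odd p -> finite_ext_Zp p O ->
  abelian [set: gT] -> has_char_values O gT ->
  forall x : {ffun gT -> O},
    (forall psi : gT -> O, is_character psi ->
       (exists2 g, g \in I & psi g != 1) -> char_eval psi x = 0)
    <-> (exists y : {ffun gT -> O}, x = gmul (normI O I) y).
Proof.
move=> _ _ [charO0 _] abG hcv x; split => [x_ker | [y ->] psi psi_char ntI].
  exact/normI_divides_invariant/(kernel_shift_invariant charO0 abG hcv x_ker).
rewrite char_eval_gmul // char_eval_normI.
by rewrite (sum_char_nontrivial psi_char ntI) mul0r.
Qed.
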